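(* Let $\beta>0$, $\nu>-1$, $\kappa>0$, $\gamma=\beta/(\nu+2)$, $\eta_\infty>0$, and let $s\in\mathbb{R}$ satisfy $$\frac{\beta(\nu+1)}{2(\nu+2)\,\eta_\infty^{\nu+3}}<s^2<\frac{\beta}{\eta_\infty^{\nu+3}}.$$ Then there exists a non-constant smooth solution $(w_s(z),\eta_s(z))$, $z\in\mathbb{R}$, with $\eta_s>0$, of the system $$s\,w_s+\eta_\infty^{-(\nu+2)}-\eta_s^{-(\nu+2)}=0,\qquad \gamma w_s-\kappa w_s''+s(\eta_s-\eta_\infty)=0,$$ satisfying $\lim_{|z|\to\infty}\eta_s(z)=\eta_\infty$ and $\lim_{|z|\to\infty}w_s(z)=0$. Moreover $\eta_s(z)>\eta_\infty$ for all $z$, i.e. in the phase plane $(\eta_s,\eta_s')$ this solution is a homoclinic loop to the saddle point $(\eta_\infty,0)$ lying to the right of it.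
   Context: These equations describe traveling waves $w=w_s(x-st)$, $\eta=\eta_s(x-st)$ of the system $w_t=-\partial_x(\eta^{-(\nu+2)})$, $\eta_t=(\gamma-\kappa\partial_x^2)w_x$. Eliminating $w_s$ via the first equation gives a second-order ODE for $\eta_s$. *)

From Stdlib Require Import Reals.
Open Scope R_scope.

Definition smooth (f : R -> R) : Prop :=
  exists D : nat -> R -> R,
    D 0%nat = f /\ forall (n : nat) (x : R), derivable_pt_lim (D n) x (D (S n) x).

Definition lim_pinf (f : R -> R) (l : R) : Prop :=
  forall eps : R, 0 < eps -> exists M : R, forall z : R, M < z -> Rabs (f z - l) < eps.

Definition lim_minf (f : R -> R) (l : R) : Prop :=
  forall eps : R, 0 < eps -> exists M : R, forall z : R, z < M -> Rabs (f z - l) < eps.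

From Stdlib Require Import Reals Lra FunctionalExtensionality ClassicalEpsilon.
From Stdlib Require Ranalysis5.
From Coquelicot Require Import Coquelicot.
Open Scope R_scope.

(* In the variable [u = eta ^ (- (nu + 2))], with [w = (u - u_inf) / s], the
   system becomes the conservative equation [u'' = force u], where [force] is
   convex and vanishes at the rest state [u_inf = eta_inf ^ (- (nu + 2))].
   The upper bound on [s ^ 2] gives [force' u_inf > 0], so [u_inf] is a saddle
   and the potential [P = 2 * int_(u_inf)^u force] has a double zero there; the
   lower bound makes [P] negative near [0]. Hence [P] has a last zero
   [ut < u_inf], with [P > 0] on [(ut, u_inf)], and convexity gives
   [force ut > 0]. On the homoclinic orbit [u' ^ 2 = P u], so the time to
   reach [x] is [int dv / sqrt (P v)]: finite at the simple zero [ut], infinite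
   at the double zero [u_inf]. Inverting it and reflecting evenly gives the
   orbit, smooth by bootstrapping [u'' = force u], and [u < u_inf] means
   [eta > eta_inf]. *)

(* Proves [derivable_pt_lim f x l] by Coquelicot's [auto_derive], reading the
   derivatives of the functions it cannot differentiate symbolically off the
   [derivable_pt_lim] hypotheses in the context. *)
Ltac auto_derive_from_hyps :=
  apply is_derive_Reals; auto_derive;
  [ repeat split; try (eexists; apply is_derive_Reals; eassumption)
  | repeat match goal with |- context [Derive ?f ?x] =>
      erewrite (is_derive_unique f x) by (apply is_derive_Reals; eassumption) end ].

Lemma derivable_pt_lim_continuity_pt f x l :
  derivable_pt_lim f x l -> continuity_pt f x.
Proof. intros H; apply derivable_continuous_pt; exists l; exact H. Qed.

Lemma continuity_pt_ball f x :
  continuity_pt f x <-> forall eps, 0 < eps ->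
    exists delta, 0 < delta /\ forall y, Rabs (y - x) < delta -> Rabs (f y - f x) < eps.
Proof.
  split.
  - intros H eps Heps. destruct (H eps Heps) as [d [Hd Hy]].
    exists d; split; [exact Hd|]. intros y Hyx.
    destruct (Req_dec y x) as [->|Hne].
    + rewrite Rminus_eq_0, Rabs_R0; exact Heps.
    + apply (Hy y); repeat split; auto.
  - intros H eps Heps. destruct (H eps Heps) as [d [Hd Hy]].
    exists d; split; [exact Hd|]. intros y [_ Hyx]. apply Hy, Hyx.
Qed.

Lemma Rpower_lt_neg a x y : a < 0 -> 0 < x < y -> Rpower y a < Rpower x a.
Proof.
  intros Ha [Hx Hxy]. apply exp_increasing.
  assert (ln x < ln y) by (apply ln_increasing; lra). nra.
Qed.

Lemma Rpower_pos x a : 0 < Rpower x a.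
Proof. apply exp_pos. Qed.

Section Monotonicity.
Variables (f df : R -> R) (a b : R).
Hypothesis hf : forall x, a <= x <= b -> derivable_pt_lim f x (df x).

Lemma derive_nonneg_le : a <= b -> (forall x, a <= x <= b -> 0 <= df x) -> f a <= f b.
Proof.
  intros [Hab| ->] Hpos; [|lra].
  destruct (MVT_cor2 f df a b Hab hf) as [c [E Hc]].
  assert (0 <= df c) by (apply Hpos; lra). nra.
Qed.

Lemma derive_nonpos_le : a <= b -> (forall x, a <= x <= b -> df x <= 0) -> f b <= f a.
Proof.
  intros [Hab| ->] Hneg; [|lra].
  destruct (MVT_cor2 f df a b Hab hf) as [c [E Hc]].
  assert (df c <= 0) by (apply Hneg; lra). nra.
Qed.

Lemma derive_pos_lt : a < b -> (forall x, a < x < b -> 0 < df x) -> f a < f b.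
Proof.
  intros Hab Hpos. destruct (MVT_cor2 f df a b Hab hf) as [c [E Hc]].
  assert (0 < df c) by (apply Hpos; lra). nra.
Qed.

Lemma derive_neg_lt : a < b -> (forall x, a < x < b -> df x < 0) -> f b < f a.
Proof.
  intros Hab Hneg. destruct (MVT_cor2 f df a b Hab hf) as [c [E Hc]].
  assert (df c < 0) by (apply Hneg; lra). nra.
Qed.

Lemma le_Rmax_of_derive_nondecreasing y :
  a < y < b -> (forall x x', a <= x <= x' -> x' <= b -> df x <= df x') ->
  f y <= Rmax (f a) (f b).
Proof.
  intros Hy Hmono.
  destruct (MVT_cor2 f df a y ltac:(lra) ltac:(intros; apply hf; lra)) as [c1 [E1 Hc1]].
  destruct (MVT_cor2 f df y b ltac:(lra) ltac:(intros; apply hf; lra)) as [c2 [E2 Hc2]].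
  assert (df c1 <= df c2) by (apply Hmono; lra).
  assert (f a <= Rmax (f a) (f b)) by apply Rmax_l.
  assert (f b <= Rmax (f a) (f b)) by apply Rmax_r.
  destruct (Rle_lt_dec (f y) (f a)); [lra|].
  assert (0 < df c1) by nra. assert (0 < df c2) by lra. nra.
Qed.

End Monotonicity.

Lemma derivable_pt_lim_of_continuous_derivative f df x0 :
  (forall x, continuity_pt f x) ->
  (forall x, x <> x0 -> derivable_pt_lim f x (df x)) -> continuity_pt df x0 ->
  derivable_pt_lim f x0 (df x0).
Proof.
  intros Hc Hd Hdc eps Heps.
  destruct (proj1 (continuity_pt_ball _ _) Hdc eps Heps) as [d [Hd0 Hdd]].
  exists (mkposreal _ Hd0). intros h Hh Hlt; simpl in Hlt.
  destruct (MVT_gen f x0 (x0 + h) df) as [c [Hcr E]].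
  - intros x Hx. apply is_derive_Reals, Hd.
    destruct Hx as [H1 H2]. intros ->.
    destruct (Rle_dec x0 (x0 + h)).
    + rewrite Rmin_left in H1; lra.
    + rewrite Rmax_left in H2; lra.
  - intros; apply Hc.
  - replace ((f (x0 + h) - f x0) / h - df x0) with (df c - df x0).
    + apply Hdd. destruct Hcr as [H1 H2].
      destruct (Rle_dec x0 (x0 + h)).
      * rewrite Rmin_left in H1 by lra; rewrite Rmax_right in H2 by lra.
        rewrite Rabs_right by lra. rewrite Rabs_right in Hlt by lra. lra.
      * rewrite Rmin_right in H1 by lra; rewrite Rmax_left in H2 by lra.
        rewrite Rabs_left1 by lra. rewrite Rabs_left in Hlt by lra. lra.
    + rewrite E. replace (x0 + h - x0) with h by ring. field; exact Hh.
Qed.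

Lemma derivable_pt_lim_RInt f a b c x :
  a < c < b -> (forall y, a < y < b -> continuity_pt f y) -> a < x < b ->
  derivable_pt_lim (fun y => RInt f c y) x (f x).
Proof.
  intros Hc Hf Hx. apply is_derive_Reals, is_derive_RInt with (a := c).
  - assert (He : 0 < Rmin (x - a) (b - x)) by (apply Rmin_pos; lra).
    exists (mkposreal _ He). intros y Hy.
    assert (Hya : Rabs (y - x) < Rmin (x - a) (b - x)) by exact Hy.
    assert (H1 := Rmin_l (x - a) (b - x)). assert (H2 := Rmin_r (x - a) (b - x)).
    apply Rabs_def2 in Hya.
    apply (@RInt_correct R_CompleteNormedModule), (@ex_RInt_continuous R_CompleteNormedModule).
    intros z Hz. apply continuity_pt_filterlim, Hf.
    assert (Rmin c y > a) by (unfold Rmin; destruct Rle_dec; lra).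
    assert (Rmax c y < b) by (unfold Rmax; destruct Rle_dec; lra). lra.
  - apply continuity_pt_filterlim, Hf, Hx.
Qed.

Definition derivable_n (P : R -> Prop) (n : nat) (f : R -> R) : Prop :=
  exists D : nat -> R -> R, D 0%nat = f /\
    forall k x, (k < n)%nat -> P x -> derivable_pt_lim (D k) x (D (S k) x).

Section DerivableN.
Variable P : R -> Prop.

Lemma derivable_n_0 f : derivable_n P 0 f.
Proof. exists (fun _ => f); split; [reflexivity|]; intros k x Hk; inversion Hk. Qed.

Lemma derivable_n_S n f df :
  (forall x, P x -> derivable_pt_lim f x (df x)) -> derivable_n P n df ->
  derivable_n P (S n) f.
Proof.
  intros Hd [D [H0 HD]].
  exists (fun k => match k with O => f | S k => D k end); split; [reflexivity|].
  intros [|k] x Hk Px; simpl.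
  - rewrite H0; auto.
  - apply HD; auto with arith.
Qed.

Lemma derivable_n_S_inv n f :
  derivable_n P (S n) f ->
  exists df, (forall x, P x -> derivable_pt_lim f x (df x)) /\ derivable_n P n df.
Proof.
  intros [D [H0 HD]]. exists (D 1%nat); split.
  - intros x Px; rewrite <- H0; apply HD; auto with arith.
  - exists (fun k => D (S k)); split; [reflexivity|].
    intros k x Hk Px; apply HD; auto with arith.
Qed.

Lemma derivable_n_pred n f : derivable_n P (S n) f -> derivable_n P n f.
Proof. intros [D [H0 HD]]; exists D; split; auto. Qed.

Lemma derivable_n_ext n f g : derivable_n P n f -> (forall x, f x = g x) -> derivable_n P n g.
Proof. intros H E; replace g with f; [exact H|apply functional_extensionality, E]. Qed.

Lemma derivable_n_const n c : derivable_n P n (fun _ => c).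
Proof.
  exists (fun k => match k with O => fun _ => c | _ => fun _ => 0 end); split; [reflexivity|].
  intros [|k] x _ _; apply derivable_pt_lim_const.
Qed.

Lemma derivable_n_id n : derivable_n P n (fun x => x).
Proof.
  exists (fun k => match k with O => fun x => x | 1%nat => fun _ => 1 | _ => fun _ => 0 end).
  split; [reflexivity|].
  intros [|[|k]] x _ _; [apply derivable_pt_lim_id|apply derivable_pt_lim_const..].
Qed.

Lemma derivable_n_plus n f g :
  derivable_n P n f -> derivable_n P n g -> derivable_n P n (fun x => f x + g x).
Proof.
  intros [D [H0 HD]] [E [E0 HE]]. exists (fun k x => D k x + E k x); split.
  - subst; reflexivity.
  - intros; apply (derivable_pt_lim_plus (D k) (E k)); auto.
Qed.

Lemma derivable_n_scal n c f : derivable_n P n f -> derivable_n P n (fun x => c * f x).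
Proof.
  intros [D [H0 HD]]. exists (fun k x => c * D k x); split.
  - subst; reflexivity.
  - intros; apply (derivable_pt_lim_scal (D k)); auto.
Qed.

Lemma derivable_n_mult n : forall f g,
  derivable_n P n f -> derivable_n P n g -> derivable_n P n (fun x => f x * g x).
Proof.
  induction n as [|n IH]; intros f g Hf Hg; [apply derivable_n_0|].
  destruct (derivable_n_S_inv _ _ Hf) as [df [Hdf Cdf]].
  destruct (derivable_n_S_inv _ _ Hg) as [dg [Hdg Cdg]].
  apply derivable_n_S with (df := fun x => df x * g x + f x * dg x).
  - intros x Px; apply (derivable_pt_lim_mult f g); auto.
  - apply derivable_n_plus; apply IH; auto using derivable_n_pred.
Qed.

End DerivableN.

Lemma derivable_n_comp Q P n : forall f g,
  derivable_n Q n f -> derivable_n P n g -> (forall x, P x -> Q (g x)) ->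
  derivable_n P n (fun x => f (g x)).
Proof.
  induction n as [|n IH]; intros f g Hf Hg HPQ; [apply derivable_n_0|].
  destruct (derivable_n_S_inv _ _ _ Hf) as [df [Hdf Cdf]].
  destruct (derivable_n_S_inv _ _ _ Hg) as [dg [Hdg Cdg]].
  apply derivable_n_S with (df := fun x => df (g x) * dg x).
  - intros x Px; apply (derivable_pt_lim_comp g f); auto.
  - apply derivable_n_mult; auto. apply IH; auto using derivable_n_pred.
Qed.

Lemma derivable_n_Rpower n : forall a, derivable_n (fun x => 0 < x) n (fun x => Rpower x a).
Proof.
  induction n as [|n IH]; intros a; [apply derivable_n_0|].
  apply derivable_n_S with (df := fun x => a * Rpower x (a - 1)).
  - intros x Px; apply derivable_pt_lim_power, Px.
  - apply derivable_n_scal, IH.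
Qed.

(* Derivatives are unique, so the witnesses for the various orders can be glued
   into one sequence of successive derivatives. *)
Lemma smooth_of_derivable_n f : (forall n, derivable_n (fun _ => True) n f) -> smooth f.
Proof.
  intros H.
  set (E := fun n => proj1_sig (constructive_indefinite_description _ (H n))).
  assert (HE : forall n, E n 0%nat = f /\
             forall k x, (k < n)%nat -> derivable_pt_lim (E n k) x (E n (S k) x)).
  { intros n; unfold E; destruct (constructive_indefinite_description _ (H n)) as [D [H0 HD]].
    simpl; split; auto. }
  set (D := fun k => E (S k) k).
  assert (HD : forall k m, (k < m)%nat -> E m k = D k).
  { induction k as [|k IH]; intros m Hm.
    - unfold D; rewrite (proj1 (HE m)), (proj1 (HE 1%nat)); reflexivity.
    - apply functional_extensionality; intros x. unfold D.
      apply uniqueness_limite with (f := D k) (x := x).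
      + rewrite <- (IH m) by auto with arith. apply (proj2 (HE m)); auto with arith.
      + rewrite <- (IH (S (S k))) by auto with arith. apply (proj2 (HE (S (S k)))); auto. }
  exists D; split.
  - apply (proj1 (HE 1%nat)).
  - intros n x. rewrite <- (HD n (S (S n))), <- (HD (S n) (S (S n))) by auto with arith.
    apply (proj2 (HE _)); auto.
Qed.

Lemma derivable_n_second_order_solution (Q : R -> Prop) (u v G : R -> R) :
  (forall z, derivable_pt_lim u z (v z)) ->
  (forall z, derivable_pt_lim v z (G (u z))) ->
  (forall z, Q (u z)) ->
  (forall n, derivable_n Q n G) ->
  forall n, derivable_n (fun _ => True) n u /\ derivable_n (fun _ => True) n v.
Proof.
  intros Hu Hv Hpos HG n; induction n as [|n [IHu IHv]].
  - split; apply derivable_n_0.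
  - split.
    + apply derivable_n_S with (df := v); auto.
    + apply derivable_n_S with (df := fun z => G (u z)); auto.
      apply derivable_n_comp with (Q := Q); auto.
Qed.

Lemma Rpower_le_base x r : 0 < x <= 1 -> 1 <= r -> Rpower x r <= x.
Proof.
  intros Hx Hr. rewrite <- (exp_ln x) at 2 by lra. unfold Rpower.
  assert (ln x <= 0) by (rewrite <- ln_1; apply ln_le; lra).
  destruct (Req_dec (r * ln x) (ln x)) as [E|E]; [rewrite E; lra|].
  left; apply exp_increasing. nra.
Qed.

Lemma last_zero f a b :
  a < b -> (forall x, a <= x < b -> continuity_pt f x) -> f a < 0 ->
  (exists c, a < c < b /\ forall x, c <= x < b -> 0 < f x) ->
  exists x0, a < x0 < b /\ f x0 = 0 /\ forall x, x0 < x < b -> 0 < f x.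
Proof.
  intros Hab Hf Ha [c [Hc Hpos_c]].
  set (Nonpos := fun x => a <= x < b /\ f x <= 0).
  assert (Hbound : bound Nonpos).
  { exists c. intros x [Hx1 Hx2]. destruct (Rle_lt_dec x c); [assumption|].
    specialize (Hpos_c x). lra. }
  assert (Hne : exists x, Nonpos x) by (exists a; unfold Nonpos; split; lra).
  destruct (completeness Nonpos Hbound Hne) as [x0 [Hub Hlub]].
  assert (Hax0 : a <= x0) by (apply Hub; split; lra).
  assert (Hx0c : x0 <= c).
  { apply Hlub. intros x [Hx1 Hx2]. destruct (Rle_lt_dec x c); [assumption|].
    specialize (Hpos_c x); lra. }
  assert (Hpos : forall x, x0 < x < b -> 0 < f x).
  { intros x Hx. destruct (Rlt_le_dec 0 (f x)) as [|Hle]; [assumption|].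
    assert (x <= x0) by (apply Hub; split; lra). lra. }
  assert (Hcont := proj1 (continuity_pt_ball _ _) (Hf x0 ltac:(lra))).
  assert (Hzero : f x0 = 0).
  { destruct (Rtotal_order (f x0) 0) as [Hlt|[Heq|Hgt]]; [exfalso| exact Heq | exfalso].
    - destruct (Hcont (- f x0)) as [d [Hd Hnear]]; [lra|].
      set (x := x0 + Rmin (d / 2) ((b - x0) / 2)).
      assert (0 < Rmin (d / 2) ((b - x0) / 2)) by (apply Rmin_pos; lra).
      assert (Rmin (d / 2) ((b - x0) / 2) <= d / 2) by apply Rmin_l.
      assert (Rmin (d / 2) ((b - x0) / 2) <= (b - x0) / 2) by apply Rmin_r.
      specialize (Hnear x ltac:(unfold x; rewrite Rabs_right; lra)).
      apply Rabs_def2 in Hnear.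
      assert (0 < f x) by (apply Hpos; unfold x; lra). lra.
    - destruct (Hcont (f x0)) as [d [Hd Hnear]]; [lra|].
      enough (x0 <= x0 - d / 2) by lra.
      apply Hlub. intros x [Hx1 Hx2].
      assert (x <= x0) by (apply Hub; split; lra).
      destruct (Rle_lt_dec x (x0 - d / 2)); [assumption|].
      specialize (Hnear x ltac:(rewrite Rabs_left1; lra)).
      apply Rabs_def2 in Hnear. lra. }
  assert (x0 <> a) by (intros ->; lra).
  exists x0; repeat split; [lra|lra|exact Hzero|exact Hpos].
Qed.

Definition lim_at_infinity (f : R -> R) (l : R) : Prop :=
  forall eps, 0 < eps -> exists M, forall z, M < Rabs z -> Rabs (f z - l) < eps.

Lemma lim_at_infinity_pinf f l : lim_at_infinity f l -> lim_pinf f l.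
Proof.
  intros H eps Heps. destruct (H eps Heps) as [M HM]. exists (Rabs M).
  intros z Hz. apply HM. assert (M <= Rabs M) by apply Rle_abs.
  assert (z <= Rabs z) by apply Rle_abs. lra.
Qed.

Lemma lim_at_infinity_minf f l : lim_at_infinity f l -> lim_minf f l.
Proof.
  intros H eps Heps. destruct (H eps Heps) as [M HM]. exists (- Rabs M).
  intros z Hz. apply HM. assert (M <= Rabs M) by apply Rle_abs.
  assert (- z <= Rabs z) by (rewrite <- Rabs_Ropp; apply Rle_abs). lra.
Qed.

Lemma lim_at_infinity_comp f g l :
  lim_at_infinity f l -> continuity_pt g l -> lim_at_infinity (fun z => g (f z)) (g l).
Proof.
  intros Hf Hg eps Heps.
  destruct (proj1 (continuity_pt_ball _ _) Hg eps Heps) as [d [Hd Hnear]].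
  destruct (Hf d Hd) as [M HM]. exists M. intros z Hz. apply Hnear, HM, Hz.
Qed.

Section Homoclinic.
Variables (F P : R -> R) (a b K : R).
Hypothesis hab : a < b.
Hypothesis hP_deriv : forall x, a <= x < b -> derivable_pt_lim P x (2 * F x).
Hypothesis hF_cont : continuity_pt F a.
Hypothesis hPa : P a = 0.
Hypothesis hFa : 0 < F a.
Hypothesis hP_pos : forall x, a < x < b -> 0 < P x.
Hypothesis hP_quadratic : forall x, a < x < b -> P x <= K * (b - x) ^ 2.

Lemma P_continuous x : a <= x < b -> continuity_pt P x.
Proof. intros Hx; exact (derivable_pt_lim_continuity_pt _ _ _ (hP_deriv x Hx)). Qed.

(* The time the orbit of [u'' = F u, u'^2 = P u] needs from the midpoint to [x]. *)
Definition transit_time (x : R) := RInt (fun y => / sqrt (P y)) ((a + b) / 2) x.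

Lemma transit_time_deriv x : a < x < b -> derivable_pt_lim transit_time x (/ sqrt (P x)).
Proof.
  intros Hx. apply (derivable_pt_lim_RInt (fun y => / sqrt (P y)) a b); [lra| |exact Hx].
  intros y Hy. apply continuity_pt_inv.
  - apply (continuity_pt_comp P sqrt); [apply P_continuous; lra|].
    apply continuity_pt_sqrt. apply Rlt_le, hP_pos, Hy.
  - apply Rgt_not_eq, sqrt_lt_R0, hP_pos, Hy.
Qed.

Lemma transit_time_lt x y : a < x -> x < y -> y < b -> transit_time x < transit_time y.
Proof.
  intros Hax Hxy Hyb. apply (derive_pos_lt transit_time (fun y => / sqrt (P y))); auto.
  - intros z Hz; apply transit_time_deriv; lra.
  - intros z Hz; apply Rinv_0_lt_compat, sqrt_lt_R0, hP_pos; lra.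
Qed.

Lemma P_ge_linear_near_a : exists c, a < c < b /\ forall x, a <= x <= c -> F a * (x - a) <= P x.
Proof.
  destruct (proj1 (continuity_pt_ball _ _) hF_cont (F a / 2)) as [d [Hd Hnear]]; [lra|].
  set (c := a + Rmin (d / 2) ((b - a) / 2)).
  assert (0 < Rmin (d / 2) ((b - a) / 2)) by (apply Rmin_pos; lra).
  assert (Rmin (d / 2) ((b - a) / 2) <= d / 2) by apply Rmin_l.
  assert (Rmin (d / 2) ((b - a) / 2) <= (b - a) / 2) by apply Rmin_r.
  exists c; split; [unfold c; lra|]. intros x Hx.
  enough (P a - F a * (a - a) <= P x - F a * (x - a)) by (rewrite hPa in *; lra).
  apply (derive_nonneg_le (fun y => P y - F a * (y - a)) (fun y => 2 * F y - F a));
    [| lra |].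
  - intros y Hy. assert (derivable_pt_lim P y (2 * F y)) by (apply hP_deriv; unfold c in *; lra).
    auto_derive_from_hyps. ring.
  - intros y Hy. specialize (Hnear y ltac:(rewrite Rabs_right; unfold c in *; lra)).
    apply Rabs_def2 in Hnear. lra.
Qed.

(* Near [a] the simple zero of [P] makes [/ sqrt P] integrable. *)
Lemma transit_time_bounded_below : exists B, forall x, a < x < b -> B <= transit_time x.
Proof.
  destruct P_ge_linear_near_a as [c [Hc Hlin]].
  assert (HsF : 0 < sqrt (F a)) by (apply sqrt_lt_R0, hFa).
  exists (transit_time c - 2 * sqrt (c - a) / sqrt (F a)). intros x Hx.
  destruct (Rle_lt_dec x c) as [Hxc|Hcx].
  2: { assert (transit_time c < transit_time x) by (apply transit_time_lt; lra).
       assert (0 <= sqrt (c - a) / sqrt (F a)) by (apply Rdiv_le_0_compat; [apply sqrt_pos|lra]).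
       lra. }
  enough (transit_time c - 2 * sqrt (c - a) / sqrt (F a)
          <= transit_time x - 2 * sqrt (x - a) / sqrt (F a)).
  { assert (0 <= sqrt (x - a) / sqrt (F a)) by (apply Rdiv_le_0_compat; [apply sqrt_pos|lra]).
    lra. }
  apply (derive_nonpos_le (fun y => transit_time y - 2 * sqrt (y - a) / sqrt (F a))
     (fun y => / sqrt (P y) - / (sqrt (F a) * sqrt (y - a)))); [|lra|].
  - intros y Hy. assert (derivable_pt_lim transit_time y (/ sqrt (P y)))
      by (apply transit_time_deriv; lra).
    auto_derive_from_hyps; [lra|].
    assert (0 < sqrt (y - a)) by (apply sqrt_lt_R0; lra).
    assert (0 < sqrt (P y)) by (apply sqrt_lt_R0, hP_pos; lra).
    replace (y + - a) with (y - a) by ring. field; lra.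
  - intros y Hy.
    assert (HP : 0 < F a * (y - a)) by (apply Rmult_lt_0_compat; lra).
    assert (Hle : sqrt (F a * (y - a)) <= sqrt (P y))
      by (apply sqrt_le_1; [lra|apply Rlt_le, hP_pos; lra|apply Hlin; lra]).
    rewrite <- sqrt_mult by lra.
    assert (/ sqrt (P y) <= / sqrt (F a * (y - a))); [|lra].
    apply Rinv_le_contravar; [apply sqrt_lt_R0, HP|exact Hle].
Qed.

Lemma K_pos : 0 < K.
Proof.
  set (m := (a + b) / 2).
  assert (0 < P m) by (apply hP_pos; unfold m; lra).
  assert (P m <= K * (b - m) ^ 2) by (apply hP_quadratic; unfold m; lra).
  assert (0 < (b - m) ^ 2) by (apply pow_lt; unfold m; lra). nra.
Qed.

(* Near [b] the double zero of [P] makes [/ sqrt P] grow like [/ (b - x)]. *)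
Lemma transit_time_ge_log x : (a + b) / 2 <= x < b ->
  (ln (b - (a + b) / 2) - ln (b - x)) / sqrt K <= transit_time x.
Proof.
  intros Hx. set (m := (a + b) / 2) in *.
  assert (HK := K_pos).
  assert (HsK : 0 < sqrt K) by (apply sqrt_lt_R0, HK).
  assert (Hm : transit_time m = 0) by (unfold transit_time; exact (RInt_point _ _)).
  enough (transit_time m + ln (b - m) / sqrt K <= transit_time x + ln (b - x) / sqrt K).
  { unfold Rdiv in *. lra. }
  apply (derive_nonneg_le (fun y => transit_time y + ln (b - y) / sqrt K)
     (fun y => / sqrt (P y) - / (sqrt K * (b - y)))); [|lra|].
  - intros y Hy. assert (derivable_pt_lim transit_time y (/ sqrt (P y)))
      by (apply transit_time_deriv; unfold m in *; lra).
    assert (0 < sqrt (P y)) by (apply sqrt_lt_R0, hP_pos; unfold m in *; lra).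
    auto_derive_from_hyps; [lra|]. replace (b + - y) with (b - y) by ring. field; lra.
  - intros y Hy. assert (Hby : 0 < b - y) by lra.
    assert (HP : 0 < P y) by (apply hP_pos; unfold m in *; lra).
    assert (sqrt (P y) <= sqrt K * (b - y)).
    { rewrite <- (sqrt_pow2 (b - y)), <- sqrt_mult by nra.
      apply sqrt_le_1; [lra|apply Rmult_le_pos; [lra|apply pow2_ge_0]|].
      apply hP_quadratic; unfold m in *; lra. }
    assert (/ (sqrt K * (b - y)) <= / sqrt (P y)); [|lra].
    apply Rinv_le_contravar; [apply sqrt_lt_R0, HP|assumption].
Qed.

Lemma transit_time_unbounded T : exists x, a < x < b /\ T < transit_time x.
Proof.
  set (m := (a + b) / 2).
  assert (HK := K_pos).
  assert (HsK : 0 < sqrt K) by (apply sqrt_lt_R0, HK).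
  set (S := sqrt K * (Rabs T + 1)).
  assert (HS : 0 < S) by (unfold S; assert (0 <= Rabs T) by apply Rabs_pos; nra).
  assert (He1 : exp (- S) < 1) by (rewrite <- exp_0; apply exp_increasing; lra).
  assert (He0 := exp_pos (- S)).
  set (x := b - (b - m) * exp (- S)).
  assert (0 < (b - m) * exp (- S) < b - m) by (unfold m; split; nra).
  exists x; split; [unfold x, m in *; lra|].
  assert (Hlog := transit_time_ge_log x ltac:(unfold x, m in *; lra)).
  fold m in Hlog.
  replace (ln (b - m) - ln (b - x)) with S in Hlog.
  2: { unfold x. replace (b - (b - (b - m) * exp (- S))) with ((b - m) * exp (- S)) by ring.
       rewrite ln_mult, ln_exp by (unfold m in *; lra). ring. }
  replace (S / sqrt K) with (Rabs T + 1) in Hlog by (unfold S; field; lra).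
  assert (T <= Rabs T) by apply Rle_abs. lra.
Qed.

Lemma transit_time_infimum : exists L, (forall x, a < x < b -> L < transit_time x) /\
  (forall eps, 0 < eps -> exists x, a < x < b /\ transit_time x < L + eps).
Proof.
  set (E := fun y => exists x, a < x < b /\ y = - transit_time x).
  destruct transit_time_bounded_below as [B HB].
  assert (Hbound : bound E) by (exists (- B); intros y [x [Hx ->]]; specialize (HB x Hx); lra).
  assert (Hne : exists y, E y).
  { exists (- transit_time ((a + b) / 2)), ((a + b) / 2); split; [lra|reflexivity]. }
  destruct (completeness E Hbound Hne) as [M [Hub Hlub]].
  exists (- M); split.
  - intros x Hx.
    assert (- transit_time ((a + x) / 2) <= M)
      by (apply Hub; exists ((a + x) / 2); split; [lra|auto]).
    assert (transit_time ((a + x) / 2) < transit_time x) by (apply transit_time_lt; lra). lra.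
  - intros eps Heps. apply NNPP. intros Hnone.
    enough (M <= M - eps) by lra.
    apply Hlub. intros y [x [Hx ->]].
    destruct (Rlt_le_dec (transit_time x) (- M + eps)) as [Hlt|]; [|lra].
    exfalso; apply Hnone; exists x; split; assumption.
Qed.

Section Orbit.
Variable L : R.
Hypothesis hL_lt : forall x, a < x < b -> L < transit_time x.
Hypothesis hL_approx : forall eps, 0 < eps -> exists x, a < x < b /\ transit_time x < L + eps.

(* Time elapsed since the orbit left [a]. *)
Definition elapsed (x : R) := transit_time x - L.

Lemma elapsed_pos x : a < x < b -> 0 < elapsed x.
Proof. intros Hx; unfold elapsed; specialize (hL_lt x Hx); lra. Qed.

Lemma elapsed_lt x y : a < x -> x < y -> y < b -> elapsed x < elapsed y.
Proof.
  intros; unfold elapsed.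
  assert (transit_time x < transit_time y) by (apply transit_time_lt; auto). lra.
Qed.

Lemma elapsed_le x y : a < x -> x <= y -> y < b -> elapsed x <= elapsed y.
Proof. intros H1 [H2| ->] H3; [left; apply elapsed_lt; auto|lra]. Qed.

Lemma elapsed_deriv x : a < x < b -> derivable_pt_lim elapsed x (/ sqrt (P x)).
Proof.
  intros Hx. assert (derivable_pt_lim transit_time x (/ sqrt (P x)))
    by (apply transit_time_deriv, Hx).
  unfold elapsed. auto_derive_from_hyps. ring.
Qed.

Lemma elapsed_continuous x : a < x < b -> continuity_pt elapsed x.
Proof. intros Hx; exact (derivable_pt_lim_continuity_pt _ _ _ (elapsed_deriv x Hx)). Qed.

Lemma elapsed_onto z : 0 < z -> exists x, a < x < b /\ elapsed x = z.
Proof.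
  intros Hz. destruct (hL_approx z Hz) as [x1 [Hx1 H1]].
  destruct (transit_time_unbounded (L + z)) as [x2 [Hx2 H2]].
  assert (Hx12 : x1 < x2).
  { destruct (Rlt_le_dec x1 x2) as [|Hle]; [assumption|].
    assert (elapsed x2 <= elapsed x1) by (apply elapsed_le; lra). unfold elapsed in *; lra. }
  destruct (Ranalysis5.IVT_interv (fun x => elapsed x - z) x1 x2) as [x [Hx Ex]];
    [| exact Hx12 | unfold elapsed; lra | unfold elapsed; lra |].
  - intros y Hy. apply (continuity_pt_minus elapsed (fun _ => z)).
    + apply elapsed_continuous; lra.
    + apply continuity_pt_const; intros ? ?; reflexivity.
  - exists x; split; lra.
Qed.

(* The position at elapsed time [z]; the junk value [a] for [z <= 0] is where
   the half orbit starts. *)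
Definition position (z : R) : R := epsilon (inhabits a)
  (fun x => (z <= 0 /\ x = a) \/ (0 < z /\ a < x < b /\ elapsed x = z)).

Lemma position_pos z : 0 < z -> a < position z < b /\ elapsed (position z) = z.
Proof.
  intros Hz. unfold position.
  destruct (epsilon_spec (inhabits a)
      (fun x => (z <= 0 /\ x = a) \/ (0 < z /\ a < x < b /\ elapsed x = z)))
    as [[H1 _]|[_ H]]; [|lra|exact H].
  destruct (elapsed_onto z Hz) as [x Hx]; exists x; right; auto.
Qed.

Lemma position_nonpos z : z <= 0 -> position z = a.
Proof.
  intros Hz. unfold position.
  destruct (epsilon_spec (inhabits a)
      (fun x => (z <= 0 /\ x = a) \/ (0 < z /\ a < x < b /\ elapsed x = z)))
    as [[_ H]|[H _]]; [exists a; left; auto|exact H|lra].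
Qed.

Lemma position_elapsed x : a < x < b -> position (elapsed x) = x.
Proof.
  intros Hx. destruct (position_pos _ (elapsed_pos x Hx)) as [H1 H2].
  destruct (Rtotal_order (position (elapsed x)) x) as [Hlt|[Heq|Hgt]]; [|exact Heq|].
  - assert (elapsed (position (elapsed x)) < elapsed x) by (apply elapsed_lt; lra). lra.
  - assert (elapsed x < elapsed (position (elapsed x))) by (apply elapsed_lt; lra). lra.
Qed.

Lemma position_lt z1 z2 : 0 < z1 -> z1 < z2 -> position z1 < position z2.
Proof.
  intros H1 H2. destruct (position_pos z1 H1) as [A1 B1].
  destruct (position_pos z2 ltac:(lra)) as [A2 B2].
  destruct (Rlt_le_dec (position z1) (position z2)) as [|Hle]; [assumption|].
  assert (elapsed (position z2) <= elapsed (position z1)) by (apply elapsed_le; lra). lra.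
Qed.

Lemma position_le z1 z2 : 0 < z1 -> z1 <= z2 -> position z1 <= position z2.
Proof. intros H1 [H2| ->]; [left; apply position_lt; auto|lra]. Qed.

Lemma position_continuous z : 0 < z -> continuity_pt position z.
Proof.
  intros Hz.
  destruct (position_pos (z / 2) ltac:(lra)) as [Hl El].
  destruct (position_pos (2 * z) ltac:(lra)) as [Hu Eu].
  assert (position (z / 2) < position (2 * z)) by (apply position_lt; lra).
  apply (Ranalysis5.continuity_pt_recip_interv elapsed position
           (position (z / 2)) (position (2 * z)));
    [assumption | | | | | rewrite El, Eu; lra].
  - intros x y Hx Hxy Hy. apply elapsed_lt; lra.
  - intros y H1 H2. rewrite El in H1; rewrite Eu in H2.
    unfold comp, id. apply position_pos; lra.
  - intros y H1 H2. rewrite El in H1; rewrite Eu in H2.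
    split; apply position_le; lra.
  - intros x Hx. apply elapsed_continuous; lra.
Qed.

Lemma position_deriv z : 0 < z -> derivable_pt_lim position z (sqrt (P (position z))).
Proof.
  intros Hz.
  destruct (position_pos z Hz) as [Hx Ex].
  destruct (position_pos (z / 2) ltac:(lra)) as [Hl _].
  destruct (position_pos (2 * z) ltac:(lra)) as [Hu _].
  assert (Hlx : position (z / 2) <= position z) by (apply position_le; lra).
  assert (Hxu : position z <= position (2 * z)) by (apply position_le; lra).
  assert (HP : 0 < sqrt (P (position z))) by (apply sqrt_lt_R0, hP_pos, Hx).
  pose (Prf := fun y (Hy : position (z / 2) <= y <= position (2 * z)) =>
    exist (fun l => derivable_pt_lim elapsed y l) (/ sqrt (P y))
      (elapsed_deriv y ltac:(destruct Hy; lra))).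
  assert (E : derive_pt elapsed (position z) (Prf (position z) (conj Hlx Hxu))
              = / sqrt (P (position z))) by reflexivity.
  replace (sqrt (P (position z))) with (1 / derive_pt elapsed (position z) (Prf _ (conj Hlx Hxu)))
    by (rewrite E; field; lra).
  apply (Ranalysis5.derivable_pt_lim_recip_interv elapsed position (z / 2) (2 * z) z Prf);
    [apply position_continuous, Hz | lra | lra | | rewrite E; apply Rinv_neq_0_compat; lra].
  intros y Hy. exact (proj2 (position_pos y ltac:(lra))).
Qed.

Definition orbit (z : R) := position (Rabs z).
Definition orbit_speed (z : R) := (if Rlt_dec z 0 then -1 else 1) * sqrt (P (orbit z)).

Lemma orbit_0 : orbit 0 = a.
Proof. unfold orbit; rewrite Rabs_R0; apply position_nonpos; lra. Qed.

Lemma orbit_gt z : z <> 0 -> a < orbit z < b.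
Proof. intros Hz; apply position_pos, Rabs_pos_lt, Hz. Qed.

Lemma orbit_range z : a <= orbit z < b.
Proof.
  destruct (Req_dec z 0) as [->|Hz]; [rewrite orbit_0; lra|].
  destruct (orbit_gt z Hz); lra.
Qed.

Lemma orbit_deriv_nonzero z : z <> 0 -> derivable_pt_lim orbit z (orbit_speed z).
Proof.
  intros Hz. assert (Habs := Rabs_pos_lt z Hz).
  assert (Hd := position_deriv _ Habs).
  unfold orbit_speed, orbit. destruct (Rlt_dec z 0) as [Hlt|Hge].
  - rewrite Rmult_comm. apply (derivable_pt_lim_comp Rabs position); [|exact Hd].
    apply Rabs_derive_2, Hlt.
  - rewrite Rmult_comm. apply (derivable_pt_lim_comp Rabs position); [|exact Hd].
    apply Rabs_derive_1; lra.
Qed.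

Lemma orbit_speed_deriv_nonzero z : z <> 0 -> derivable_pt_lim orbit_speed z (F (orbit z)).
Proof.
  intros Hz. destruct (orbit_gt z Hz) as [Ha Hb].
  assert (HP : 0 < P (orbit z)) by (apply hP_pos; lra).
  assert (HsP : 0 < sqrt (P (orbit z))) by (apply sqrt_lt_R0, HP).
  assert (Hd := orbit_deriv_nonzero z Hz).
  assert (HdP : derivable_pt_lim P (orbit z) (2 * F (orbit z))) by (apply hP_deriv; lra).
  set (sgn := if Rlt_dec z 0 then -1 else 1).
  assert (Hsgn : sgn * sgn = 1) by (unfold sgn; destruct Rlt_dec; ring).
  assert (Hloc : locally z (fun y => sgn * sqrt (P (orbit y)) = orbit_speed y)).
  { unfold orbit_speed, sgn. destruct (Rlt_dec z 0) as [Hlt|Hge].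
    - apply (filter_imp (fun y => y < 0)); [|apply open_lt, Hlt].
      intros y Hy; destruct (Rlt_dec y 0); [reflexivity|lra].
    - apply (filter_imp (fun y => 0 < y)); [|apply open_gt; lra].
      intros y Hy; destruct (Rlt_dec y 0); [lra|reflexivity]. }
  apply is_derive_Reals. apply (is_derive_ext_loc _ _ _ _ Hloc). apply is_derive_Reals.
  replace (orbit_speed z) with (sgn * sqrt (P (orbit z))) in Hd by reflexivity.
  auto_derive_from_hyps; [exact HP|].
  transitivity ((sgn * sgn) * F (orbit z)); [field; lra|rewrite Hsgn; ring].
Qed.

Lemma orbit_continuous z : continuity_pt orbit z.
Proof.
  destruct (Req_dec z 0) as [->|Hz];
    [|exact (derivable_pt_lim_continuity_pt _ _ _ (orbit_deriv_nonzero z Hz))].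
  apply continuity_pt_ball. intros eps Heps. rewrite orbit_0.
  set (e := Rmin eps ((b - a) / 2)).
  assert (He : 0 < e) by (unfold e; apply Rmin_pos; lra).
  assert (e <= eps) by apply Rmin_l. assert (e <= (b - a) / 2) by apply Rmin_r.
  exists (elapsed (a + e)); split; [apply elapsed_pos; lra|].
  intros y Hy. rewrite Rminus_0_r in Hy.
  destruct (Req_dec y 0) as [->|Hy0]; [rewrite orbit_0, Rminus_eq_0, Rabs_R0; lra|].
  destruct (orbit_gt y Hy0) as [Ha _].
  assert (Hlt : orbit y < position (elapsed (a + e)))
    by (apply position_lt; [apply Rabs_pos_lt|]; assumption).
  rewrite position_elapsed in Hlt by lra. rewrite Rabs_right; lra.
Qed.

Lemma orbit_speed_continuous z : continuity_pt orbit_speed z.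
Proof.
  destruct (Req_dec z 0) as [->|Hz];
    [|exact (derivable_pt_lim_continuity_pt _ _ _ (orbit_speed_deriv_nonzero z Hz))].
  set (w := fun y => sqrt (P (orbit y))).
  assert (Hw : continuity_pt w 0).
  { apply (continuity_pt_comp (fun y => P (orbit y)) sqrt).
    - apply (continuity_pt_comp orbit P); [apply orbit_continuous|].
      rewrite orbit_0; apply P_continuous; lra.
    - apply continuity_pt_sqrt. rewrite orbit_0, hPa; lra. }
  assert (Ew0 : w 0 = 0) by (unfold w; rewrite orbit_0, hPa; apply sqrt_0).
  assert (Ev0 : orbit_speed 0 = 0).
  { unfold orbit_speed. fold (w 0). rewrite Ew0; ring. }
  apply continuity_pt_ball. intros eps Heps.
  destruct (proj1 (continuity_pt_ball _ _) Hw eps Heps) as [d [Hd Hy]].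
  exists d; split; [exact Hd|]. intros y Hyd. specialize (Hy y Hyd).
  rewrite Ev0. rewrite Ew0 in Hy. unfold orbit_speed; fold (w y).
  rewrite !Rminus_0_r in *. rewrite Rabs_mult.
  destruct (Rlt_dec y 0); [rewrite Rabs_m1|rewrite Rabs_R1]; lra.
Qed.

Lemma orbit_deriv z : derivable_pt_lim orbit z (orbit_speed z).
Proof.
  destruct (Req_dec z 0) as [->|Hz]; [|apply orbit_deriv_nonzero, Hz].
  apply derivable_pt_lim_of_continuous_derivative;
    [apply orbit_continuous|apply orbit_deriv_nonzero|apply orbit_speed_continuous].
Qed.

Lemma orbit_speed_deriv z : derivable_pt_lim orbit_speed z (F (orbit z)).
Proof.
  destruct (Req_dec z 0) as [->|Hz]; [|apply orbit_speed_deriv_nonzero, Hz].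
  apply (derivable_pt_lim_of_continuous_derivative orbit_speed (fun y => F (orbit y)));
    [apply orbit_speed_continuous|apply orbit_speed_deriv_nonzero|].
  apply (continuity_pt_comp orbit F); [apply orbit_continuous|rewrite orbit_0; exact hF_cont].
Qed.

Lemma orbit_tends_to_b : lim_at_infinity orbit b.
Proof.
  intros eps Heps. set (e := Rmin eps ((b - a) / 2)).
  assert (He : 0 < e) by (unfold e; apply Rmin_pos; lra).
  assert (e <= eps) by apply Rmin_l. assert (e <= (b - a) / 2) by apply Rmin_r.
  assert (Hpos := elapsed_pos (b - e) ltac:(lra)).
  exists (elapsed (b - e)). intros z Hz.
  destruct (orbit_gt z ltac:(intros ->; rewrite Rabs_R0 in Hz; lra)) as [_ Hb].
  assert (Hlt : position (elapsed (b - e)) < orbit z) by (apply position_lt; assumption).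
  rewrite position_elapsed in Hlt by lra. rewrite Rabs_left; lra.
Qed.

End Orbit.

Theorem homoclinic_orbit : exists u v : R -> R,
  (forall z, derivable_pt_lim u z (v z)) /\
  (forall z, derivable_pt_lim v z (F (u z))) /\
  (forall z, a <= u z < b) /\ u 0 = a /\ (forall z, z <> 0 -> a < u z) /\
  lim_at_infinity u b.
Proof.
  destruct transit_time_infimum as [L [HL1 HL2]].
  exists (orbit L), (orbit_speed L).
  split; [intros z; eapply orbit_deriv; eassumption|].
  split; [intros z; eapply orbit_speed_deriv; eassumption|].
  split; [intros z; eapply orbit_range; eassumption|].
  split; [apply orbit_0|].
  split; [intros z Hz; destruct (orbit_gt L HL2 z Hz); lra|].
  eapply orbit_tends_to_b; eassumption.
Qed.

End Homoclinic.

Section TravelingWave.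
Variables beta nu kappa gamma e s : R.
Hypothesis hbeta : 0 < beta.
Hypothesis hnu : -1 < nu.
Hypothesis hkappa : 0 < kappa.
Hypothesis hgamma : gamma = beta / (nu + 2).
Hypothesis heta : 0 < e.
Hypothesis hs_lo : beta * (nu + 1) / (2 * (nu + 2) * Rpower e (nu + 3)) < s ^ 2.
Hypothesis hs_hi : s ^ 2 < beta / Rpower e (nu + 3).

(* [eta = u ^ (- p_nu)]; the profile equation is [u'' = force u], with first
   integral [u' ^ 2 = potential u]. *)
Definition p_nu := / (nu + 2).
Definition q_nu := 1 - p_nu.
Definition u_inf := Rpower e (- (nu + 2)).
Definition force (u : R) := (gamma * (u - u_inf) + s ^ 2 * (Rpower u (- p_nu) - e)) / kappa.
Definition force' (u : R) := (gamma - s ^ 2 * p_nu * Rpower u (- p_nu - 1)) / kappa.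
Definition potential (u : R) := 2 / kappa * (gamma * (u - u_inf) ^ 2 / 2 +
   s ^ 2 * ((Rpower u q_nu - Rpower u_inf q_nu) / q_nu - e * (u - u_inf))).

Lemma p_nu_bounds : 0 < p_nu < 1.
Proof.
  unfold p_nu. split; [apply Rinv_0_lt_compat; lra|].
  rewrite <- Rinv_1. apply Rinv_lt_contravar; lra.
Qed.

Lemma q_nu_pos : 0 < q_nu.
Proof. unfold q_nu; generalize p_nu_bounds; lra. Qed.

Lemma s2_pos : 0 < s ^ 2.
Proof.
  apply Rlt_trans with (2 := hs_lo). apply Rdiv_lt_0_compat; [nra|].
  assert (0 < Rpower e (nu + 3)) by apply Rpower_pos. nra.
Qed.

Lemma s_neq_0 : s <> 0.
Proof. intros Hs. assert (H := s2_pos). rewrite Hs in H. simpl in H; lra. Qed.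

Lemma u_inf_pos : 0 < u_inf.
Proof. apply Rpower_pos. Qed.

Lemma gamma_eq : gamma = beta * p_nu.
Proof. rewrite hgamma; unfold p_nu; field; lra. Qed.

Lemma Rpower_u_inf_neg_p_nu : Rpower u_inf (- p_nu) = e.
Proof.
  unfold u_inf; rewrite Rpower_mult.
  replace (- (nu + 2) * - p_nu) with 1 by (unfold p_nu; field; lra). apply Rpower_1, heta.
Qed.

Lemma Rpower_neg_p_nu_inv u : 0 < u -> Rpower (Rpower u (- p_nu)) (- (nu + 2)) = u.
Proof.
  intros Hu; rewrite Rpower_mult.
  replace (- p_nu * - (nu + 2)) with 1 by (unfold p_nu; field; lra). apply Rpower_1, Hu.
Qed.

Lemma force_u_inf : force u_inf = 0.
Proof. unfold force; rewrite Rpower_u_inf_neg_p_nu. unfold Rdiv; ring. Qed.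

Lemma potential_u_inf : potential u_inf = 0.
Proof. unfold potential. rewrite !Rminus_eq_0. assert (H := q_nu_pos). field. lra. Qed.

(* The upper bound on [s ^ 2] makes [u_inf] a saddle point. *)
Lemma force'_u_inf_pos : 0 < force' u_inf.
Proof.
  unfold force', u_inf. rewrite Rpower_mult, gamma_eq.
  replace (- (nu + 2) * (- p_nu - 1)) with (nu + 3) by (unfold p_nu; field; lra).
  apply Rdiv_lt_0_compat; [|exact hkappa].
  assert (HA : 0 < Rpower e (nu + 3)) by apply Rpower_pos.
  assert (Hp := p_nu_bounds).
  assert (s ^ 2 * Rpower e (nu + 3) < beta).
  { apply Rmult_lt_compat_r with (r := Rpower e (nu + 3)) in hs_hi; [|exact HA].
    unfold Rdiv in hs_hi. rewrite Rmult_assoc, Rinv_l in hs_hi by lra. lra. }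
  nra.
Qed.

Lemma force'_lt x y : 0 < x < y -> force' x < force' y.
Proof.
  intros Hxy. unfold force', Rdiv. apply Rmult_lt_compat_r; [apply Rinv_0_lt_compat, hkappa|].
  assert (Rpower y (- p_nu - 1) < Rpower x (- p_nu - 1))
    by (apply Rpower_lt_neg; [generalize p_nu_bounds; lra|exact Hxy]).
  assert (0 < s ^ 2 * p_nu) by (generalize s2_pos p_nu_bounds; intros; nra). nra.
Qed.

Lemma force_deriv u : 0 < u -> derivable_pt_lim force u (force' u).
Proof.
  intros Hu. pose proof (derivable_pt_lim_power u (- p_nu) Hu).
  unfold force, force'. auto_derive_from_hyps. field; lra.
Qed.

Lemma force'_continuous u : 0 < u -> continuity_pt force' u.
Proof.
  intros Hu.
  apply (derivable_pt_lim_continuity_pt _ _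
    (s ^ 2 * p_nu * (p_nu + 1) * Rpower u (- p_nu - 2) / kappa)).
  pose proof (derivable_pt_lim_power u (- p_nu - 1) Hu).
  unfold force'. auto_derive_from_hyps.
  replace (- p_nu - 1 - 1) with (- p_nu - 2) by ring. field; lra.
Qed.

Lemma potential_deriv u : 0 < u -> derivable_pt_lim potential u (2 * force u).
Proof.
  intros Hu. assert (Hq := q_nu_pos). pose proof (derivable_pt_lim_power u q_nu Hu).
  unfold potential, force. auto_derive_from_hyps.
  replace (q_nu - 1) with (- p_nu) by (unfold q_nu; ring). field; lra.
Qed.

Lemma e_mul_u_inf : e * u_inf = Rpower u_inf q_nu.
Proof.
  unfold u_inf, q_nu, p_nu. rewrite Rpower_mult.
  rewrite <- (Rpower_1 e) at 1 by exact heta. rewrite <- Rpower_plus.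
  f_equal. field; lra.
Qed.

(* The lower bound on [s ^ 2] makes the potential negative near [u = 0]. *)
Lemma potential_gap : gamma * u_inf ^ 2 / 2 < s ^ 2 * Rpower u_inf q_nu * (1 / q_nu - 1).
Proof.
  set (A := Rpower e (nu + 3)).
  assert (HA : 0 < A) by apply Rpower_pos.
  assert (HU := u_inf_pos).
  assert (HUq : Rpower u_inf q_nu = u_inf ^ 2 * A).
  { unfold A, u_inf, q_nu, p_nu. simpl. rewrite Rmult_1_r, Rpower_mult, <- !Rpower_plus.
    f_equal. field; lra. }
  assert (Hq : 1 / q_nu - 1 = / (nu + 1)) by (unfold q_nu, p_nu; field; lra).
  rewrite HUq, Hq.
  assert (Hlo : beta * (nu + 1) < s ^ 2 * (2 * (nu + 2) * A)).
  { apply Rmult_lt_compat_r with (r := 2 * (nu + 2) * A) in hs_lo; [|nra].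
    unfold Rdiv in hs_lo. rewrite Rmult_assoc, Rinv_l in hs_lo by nra. lra. }
  assert (HU2 : 0 < u_inf ^ 2) by (apply pow_lt, HU).
  apply (Rmult_lt_reg_r (2 * (nu + 1) * (nu + 2) / u_inf ^ 2)).
  { apply Rdiv_lt_0_compat; nra. }
  rewrite hgamma. field_simplify; [|lra|lra].
  nra.
Qed.

Lemma potential_neg_somewhere : exists x, 0 < x < u_inf /\ potential x < 0.
Proof.
  set (N := s ^ 2 * Rpower u_inf q_nu * (1 / q_nu - 1) - gamma * u_inf ^ 2 / 2).
  assert (HN : 0 < N) by (unfold N; generalize potential_gap; lra).
  assert (Hq := q_nu_pos). assert (Hp := p_nu_bounds).
  assert (Hs := s2_pos). assert (HU := u_inf_pos).
  assert (Hg : 0 < gamma) by (rewrite gamma_eq; nra).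
  set (C := gamma / 2 + s ^ 2 / q_nu).
  assert (0 < s ^ 2 / q_nu) by (apply Rdiv_lt_0_compat; lra).
  assert (HC : 0 < C) by (unfold C; lra).
  set (d := Rmin 1 (Rmin (u_inf / 2) (N / (2 * C)))).
  assert (Hd0 : 0 < d) by (unfold d; repeat apply Rmin_pos; try lra; apply Rdiv_lt_0_compat; lra).
  assert (Hd1 : d <= 1) by apply Rmin_l.
  assert (Hd2 : d <= u_inf / 2) by (eapply Rle_trans; [apply Rmin_r|apply Rmin_l]).
  assert (Hd3 : d <= N / (2 * C)) by (eapply Rle_trans; [apply Rmin_r|apply Rmin_r]).
  set (x := Rpower d (1 / q_nu)).
  assert (Hx0 : 0 < x) by apply Rpower_pos.
  assert (Hxq : Rpower x q_nu = d).
  { unfold x; rewrite Rpower_mult. replace (1 / q_nu * q_nu) with 1 by (field; lra).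
    apply Rpower_1, Hd0. }
  assert (Hxd : x <= d).
  { assert (q_nu < 1) by (unfold q_nu; lra).
    apply Rpower_le_base; [lra|]. apply (Rmult_le_reg_r q_nu); [lra|]. field_simplify; lra. }
  exists x; split; [lra|].
  assert (Hexpand : kappa / 2 * potential x
          = gamma * x ^ 2 / 2 - gamma * x * u_inf - s ^ 2 * e * x + s ^ 2 * d / q_nu - N).
  { unfold potential, N. rewrite Hxq, <- e_mul_u_inf. field. lra. }
  assert (gamma * x ^ 2 / 2 <= gamma * d / 2) by (assert (x ^ 2 <= d) by nra; nra).
  assert (0 <= gamma * x * u_inf) by (apply Rmult_le_pos; nra).
  assert (0 <= s ^ 2 * e * x) by (apply Rmult_le_pos; nra).
  assert (d * C <= N / 2).
  { apply Rmult_le_compat_r with (r := C) in Hd3; [|lra].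
    replace (N / (2 * C) * C) with (N / 2) in Hd3 by (field; lra). lra. }
  assert (s ^ 2 * d / q_nu = d * (s ^ 2 / q_nu)) by (field; lra).
  assert (kappa / 2 * potential x < 0) by (unfold C in *; nra).
  assert (0 < kappa / 2) by lra. nra.
Qed.

Lemma potential_continuous u : 0 < u -> continuity_pt potential u.
Proof. intros Hu; exact (derivable_pt_lim_continuity_pt _ _ _ (potential_deriv u Hu)). Qed.

Lemma potential_pos_near_u_inf :
  exists c, 0 < c < u_inf /\ forall x, c <= x < u_inf -> 0 < potential x.
Proof.
  assert (HU := u_inf_pos). assert (H1 := force'_u_inf_pos).
  destruct (proj1 (continuity_pt_ball _ _) (force'_continuous u_inf HU) (force' u_inf / 2))
    as [d [Hd Hnear]]; [lra|].
  set (c := u_inf - Rmin (d / 2) (u_inf / 2)).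
  assert (0 < Rmin (d / 2) (u_inf / 2)) by (apply Rmin_pos; lra).
  assert (Rmin (d / 2) (u_inf / 2) <= d / 2) by apply Rmin_l.
  assert (Rmin (d / 2) (u_inf / 2) <= u_inf / 2) by apply Rmin_r.
  assert (Hc : 0 < force' c).
  { specialize (Hnear c ltac:(unfold c; rewrite Rabs_left; lra)).
    apply Rabs_def2 in Hnear. lra. }
  exists c; split; [unfold c; lra|]. intros x Hx.
  rewrite <- potential_u_inf. apply (derive_neg_lt potential (fun y => 2 * force y)); [| lra |].
  - intros y Hy; apply potential_deriv; unfold c in *; lra.
  - intros y Hy. enough (force y < force u_inf) by (rewrite force_u_inf in *; lra).
    apply (derive_pos_lt force force'); [intros; apply force_deriv; unfold c in *; lra|lra|].
    intros t Ht. apply Rlt_trans with (1 := Hc), force'_lt; unfold c in *; lra.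
Qed.

Lemma turning_point :
  exists ut, 0 < ut < u_inf /\ potential ut = 0 /\ forall x, ut < x < u_inf -> 0 < potential x.
Proof.
  destruct potential_neg_somewhere as [x0 [Hx0 Hneg]].
  destruct (last_zero potential x0 u_inf) as [ut [Hut [Hzero Hpos]]];
    [lra | intros y Hy; apply potential_continuous; lra | exact Hneg | |].
  - destruct potential_pos_near_u_inf as [c [Hc Hpos]].
    exists (Rmax c ((x0 + u_inf) / 2)).
    assert (c <= Rmax c ((x0 + u_inf) / 2)) by apply Rmax_l.
    assert ((x0 + u_inf) / 2 <= Rmax c ((x0 + u_inf) / 2)) by apply Rmax_r.
    assert (Rmax c ((x0 + u_inf) / 2) < u_inf) by (apply Rmax_lub_lt; lra).
    split; [lra|]. intros x Hx; apply Hpos; lra.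
  - exists ut; repeat split; auto; lra.
Qed.

(* [force] is convex, vanishes at [u_inf] and must be positive somewhere between
   [ut] and [u_inf]; hence it is positive at [ut]. *)
Lemma force_pos_at_turning_point ut : 0 < ut < u_inf -> potential ut = 0 ->
  (forall x, ut < x < u_inf -> 0 < potential x) -> 0 < force ut.
Proof.
  intros Hut Hzero Hpos. set (m := (ut + u_inf) / 2).
  destruct (MVT_cor2 potential (fun y => 2 * force y) ut m)
    as [xi [E Hxi]]; [unfold m; lra| intros; apply potential_deriv; unfold m in *; lra|].
  assert (Hm : 0 < potential m) by (apply Hpos; unfold m; lra).
  assert (Hfxi : 0 < force xi) by (rewrite Hzero in E; unfold m in *; nra).
  destruct (Rlt_le_dec 0 (force ut)) as [|Hle]; [assumption|exfalso].
  assert (force xi <= Rmax (force ut) (force u_inf)).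
  { apply (le_Rmax_of_derive_nondecreasing force force'); [| unfold m in *; lra |].
    - intros y Hy; apply force_deriv; lra.
    - intros y y' Hy Hy'. destruct (Req_dec y y') as [->|]; [lra|].
      left; apply force'_lt; lra. }
  rewrite force_u_inf in H. assert (Rmax (force ut) 0 <= 0) by (apply Rmax_lub; lra). lra.
Qed.

Lemma potential_le_quadratic v : 0 < v < u_inf -> potential v <= force' u_inf * (u_inf - v) ^ 2.
Proof.
  intros Hv.
  assert (Hlin : forall y, 0 < y <= u_inf -> - force' u_inf * (u_inf - y) <= force y).
  { intros y Hy. destruct (Req_dec y u_inf) as [->|HyU]; [rewrite force_u_inf; lra|].
    destruct (MVT_cor2 force force' y u_inf) as [xi [E Hxi]];
      [lra | intros; apply force_deriv; lra|].
    rewrite force_u_inf in E.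
    assert (force' xi < force' u_inf) by (apply force'_lt; lra). nra. }
  enough (potential v - force' u_inf * (u_inf - v) ^ 2
          <= potential u_inf - force' u_inf * (u_inf - u_inf) ^ 2)
    by (rewrite potential_u_inf in *; lra).
  apply (derive_nonneg_le (fun y => potential y - force' u_inf * (u_inf - y) ^ 2)
    (fun y => 2 * force y + 2 * force' u_inf * (u_inf - y))); [| lra |].
  - intros y Hy.
    assert (derivable_pt_lim potential y (2 * force y)) by (apply potential_deriv; lra).
    auto_derive_from_hyps. ring.
  - intros y Hy. specialize (Hlin y ltac:(lra)). lra.
Qed.

Lemma derivable_n_force n : derivable_n (fun x => 0 < x) n force.
Proof.
  apply derivable_n_ext with
    (f := fun u => / kappa * ((gamma * u + s ^ 2 * Rpower u (- p_nu))
                              + (- gamma * u_inf - s ^ 2 * e))).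
  - apply derivable_n_scal, derivable_n_plus; [|apply derivable_n_const].
    apply derivable_n_plus; apply derivable_n_scal; [apply derivable_n_id|apply derivable_n_Rpower].
  - intros y; unfold force; field; lra.
Qed.

Section FromOrbit.
Variables (u v : R -> R) (ut : R).
Hypothesis hut : 0 < ut.
Hypothesis hu : forall z, derivable_pt_lim u z (v z).
Hypothesis hv : forall z, derivable_pt_lim v z (force (u z)).
Hypothesis hu_range : forall z, ut <= u z < u_inf.
Hypothesis hu_lim : lim_at_infinity u u_inf.

Definition wave_w (z : R) := (u z - u_inf) / s.
Definition wave_eta (z : R) := Rpower (u z) (- p_nu).

Lemma wave_u_pos z : 0 < u z.
Proof. specialize (hu_range z); lra. Qed.

Lemma wave_u_derivable_n n : derivable_n (fun _ => True) n u.
Proof.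
  exact (proj1 (derivable_n_second_order_solution (fun x => 0 < x) u v force
    hu hv wave_u_pos derivable_n_force n)).
Qed.

Lemma wave_w_smooth : smooth wave_w.
Proof.
  apply smooth_of_derivable_n. intros n.
  apply derivable_n_ext with (f := fun z => / s * u z + (- u_inf / s)).
  - apply derivable_n_plus; [apply derivable_n_scal, wave_u_derivable_n|apply derivable_n_const].
  - intros z; unfold wave_w; field; apply s_neq_0.
Qed.

Lemma wave_eta_smooth : smooth wave_eta.
Proof.
  apply smooth_of_derivable_n. intros n.
  apply (derivable_n_comp (fun x => 0 < x) _ n (fun x => Rpower x (- p_nu)) u);
    [apply derivable_n_Rpower|apply wave_u_derivable_n|].
  intros z _; apply wave_u_pos.
Qed.

Lemma wave_w_second_order : exists w1 w2 : R -> R,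
  (forall z, derivable_pt_lim wave_w z (w1 z)) /\
  (forall z, derivable_pt_lim w1 z (w2 z)) /\
  (forall z, gamma * wave_w z - kappa * w2 z + s * (wave_eta z - e) = 0).
Proof.
  assert (Hs := s_neq_0).
  exists (fun z => v z / s), (fun z => force (u z) / s). split; [|split].
  - intros z. assert (Hz := hu z). unfold wave_w. auto_derive_from_hyps. field; exact Hs.
  - intros z. assert (Hz := hv z). auto_derive_from_hyps. field; exact Hs.
  - intros z. unfold wave_w, wave_eta, force. field. split; [lra|exact Hs].
Qed.

Lemma wave_lim_w : lim_at_infinity wave_w 0.
Proof.
  replace 0 with ((u_inf - u_inf) / s) by (unfold Rdiv; ring).
  apply (lim_at_infinity_comp u (fun x => (x - u_inf) / s)); [exact hu_lim|].
  apply (derivable_pt_lim_continuity_pt _ _ (/ s)). auto_derive_from_hyps.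
  field; apply s_neq_0.
Qed.

Lemma wave_lim_eta : lim_at_infinity wave_eta e.
Proof.
  rewrite <- Rpower_u_inf_neg_p_nu.
  apply (lim_at_infinity_comp u (fun x => Rpower x (- p_nu))); [exact hu_lim|].
  exact (derivable_pt_lim_continuity_pt _ _ _ (derivable_pt_lim_power u_inf (- p_nu) u_inf_pos)).
Qed.

Lemma wave_relation z : s * wave_w z + u_inf - Rpower (wave_eta z) (- (nu + 2)) = 0.
Proof.
  unfold wave_w, wave_eta. rewrite Rpower_neg_p_nu_inv by apply wave_u_pos.
  field; apply s_neq_0.
Qed.

Lemma wave_eta_gt z : e < wave_eta z.
Proof.
  unfold wave_eta. rewrite <- Rpower_u_inf_neg_p_nu at 1.
  apply Rpower_lt_neg; [generalize p_nu_bounds; lra|split; [apply wave_u_pos|apply hu_range]].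
Qed.

Lemma wave_w_injective z1 z2 : u z1 <> u z2 -> wave_w z1 <> wave_w z2.
Proof.
  intros Hne E. apply Hne. assert (Hs := s_neq_0). unfold wave_w in E.
  replace (u z1) with ((u z1 - u_inf) / s * s + u_inf) by (field; exact Hs).
  rewrite E. field; exact Hs.
Qed.

End FromOrbit.

Lemma traveling_wave : exists w eta : R -> R,
    smooth w /\ smooth eta /\
    (forall z, 0 < eta z) /\
    (exists z1 z2, w z1 <> w z2 \/ eta z1 <> eta z2) /\
    (forall z, s * w z + Rpower e (- (nu + 2)) - Rpower (eta z) (- (nu + 2)) = 0) /\
    (exists w1 w2 : R -> R,
       (forall z, derivable_pt_lim w z (w1 z)) /\
       (forall z, derivable_pt_lim w1 z (w2 z)) /\
       (forall z, gamma * w z - kappa * w2 z + s * (eta z - e) = 0)) /\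
    lim_pinf eta e /\ lim_minf eta e /\
    lim_pinf w 0 /\ lim_minf w 0 /\
    (forall z, e < eta z).
Proof.
  destruct turning_point as [ut [Hut [Hzero Hpos]]].
  assert (Hut0 : 0 < ut) by lra.
  destruct (homoclinic_orbit force potential ut u_inf (force' u_inf))
    as (u & v & Hu & Hv & Hrange & Hu0 & Hgt & Hlim);
    [ lra
    | intros x Hx; apply potential_deriv; lra
    | exact (derivable_pt_lim_continuity_pt _ _ _ (force_deriv ut Hut0))
    | exact Hzero
    | apply force_pos_at_turning_point; assumption
    | exact Hpos
    | intros x Hx; apply potential_le_quadratic; lra |].
  exists (wave_w u), (wave_eta u).
  split; [eapply wave_w_smooth; eassumption|].
  split; [eapply wave_eta_smooth; eassumption|].
  split; [intros z; apply Rpower_pos|].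
  split; [exists 0, 1; left; apply wave_w_injective;
          rewrite Hu0; specialize (Hgt 1 R1_neq_R0); lra|].
  split; [intros z; eapply wave_relation; eassumption|].
  split; [eapply wave_w_second_order; eassumption|].
  split; [apply lim_at_infinity_pinf; eapply wave_lim_eta; eassumption|].
  split; [apply lim_at_infinity_minf; eapply wave_lim_eta; eassumption|].
  split; [apply lim_at_infinity_pinf; eapply wave_lim_w; eassumption|].
  split; [apply lim_at_infinity_minf; eapply wave_lim_w; eassumption|].
  intros z; eapply wave_eta_gt; eassumption.
Qed.

End TravelingWave.

Theorem mainTheorem1 (beta nu kappa gamma eta_inf s : R)
  (hbeta : 0 < beta) (hnu : -1 < nu) (hkappa : 0 < kappa)
  (hgamma : gamma = beta / (nu + 2)) (heta : 0 < eta_inf)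
  (hs_lo : beta * (nu + 1) / (2 * (nu + 2) * Rpower eta_inf (nu + 3)) < s ^ 2)
  (hs_hi : s ^ 2 < beta / Rpower eta_inf (nu + 3)) :
  exists w eta : R -> R,
    smooth w /\ smooth eta /\
    (forall z, 0 < eta z) /\
    (exists z1 z2, w z1 <> w z2 \/ eta z1 <> eta z2) /\
    (forall z, s * w z + Rpower eta_inf (- (nu + 2)) - Rpower (eta z) (- (nu + 2)) = 0) /\
    (exists w1 w2 : R -> R,
       (forall z, derivable_pt_lim w z (w1 z)) /\
       (forall z, derivable_pt_lim w1 z (w2 z)) /\
       (forall z, gamma * w z - kappa * w2 z + s * (eta z - eta_inf) = 0)) /\
    lim_pinf eta eta_inf /\ lim_minf eta eta_inf /\
    lim_pinf w 0 /\ lim_minf w 0 /\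
    (forall z, eta_inf < eta z).
Proof.
  exact (traveling_wave beta nu kappa gamma eta_inf s
           hbeta hnu hkappa hgamma heta hs_lo hs_hi).
Qed.
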